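(* Let $\Omega\subset\mathbb{R}^d$ be a bounded Lipschitz domain, $\beta>0$, $g:[0,\infty)\to[0,\infty)$ continuous and strictly increasing with $g(0)=0$, $0<\alpha\le1$, $\delta,M_1,M_2>0$, and $R:=\operatorname{diam}(\Omega)$. Let $\varrho=\varrho(\Omega,\delta,M_1,M_2,\alpha)>0$ be the radius of guaranteed local injectivity described in the context. Then there exists $\bar\varepsilon>0$ depending only on $d,\Omega,\delta,\alpha,M_1,M_2,g$ such that the following holds: if $y\in C^{1,\alpha}(\Omega;\mathbb{R}^d)$ satisfies $\det\nabla y\ge\delta$, $|\nabla y|\le M_1$ on $\Omega$, $\|\nabla y\|_{C^\alpha(\Omega)}\le M_2$, if $0<\varepsilon_2\le\bar\varepsilon$, and if $$|y(x_1)-y(x_2)|>R\varepsilon_2\quad\text{for all }x_1,x_2\in\Omega\text{ with }|x_1-x_2|>\tfrac{\varrho}{2},$$ then $E^{CN}_{\varepsilon_2}(y)=0$.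
   Context: For $\varepsilon_2>0$, $E^{CN}_{\varepsilon_2}(y):=\frac{1}{\varepsilon_2^\beta}\int_{\Omega\times\Omega}\frac{1}{\varepsilon_2^d}\big[g(|\tilde x-x|)-g\big(\tfrac{1}{\varepsilon_2}|y(\tilde x)-y(x)|\big)\big]^+\,d(x,\tilde x)$, with $[a]^+=\max\{0,a\}$. The radius $\varrho>0$ depends only on $\Omega,\delta,M_1,M_2,\alpha$ and has the property that every $y\in C^{1,\alpha}(\Omega;\mathbb{R}^d)$ satisfying the three bounds is injective on $B_\varrho(\bar x)\cap\Omega$ for every $\bar x\in\bar\Omega$, with $\frac12\frac{\delta}{M_1^{d-1}}|x_1-x_2|\le|y(x_1)-y(x_2)|\le M_1\sqrt{1+L^2}|x_1-x_2|$ there ($L$ bounding the local Lipschitz constants of $\partial\Omega$). *)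

From HB Require Import structures.
From mathcomp Require Import all_boot all_order all_algebra.
From mathcomp Require Import all_classical all_reals all_analysis.
Set Implicit Arguments. Unset Strict Implicit. Unset Printing Implicit Defensive.
Import Order.TTheory GRing.Theory Num.Theory.
Import numFieldNormedType.Exports.
Local Open Scope classical_set_scope.
Local Open Scope ring_scope.

Section Defs.
Variable R : realType.

Definition dotv (d : nat) (u v : 'cV[R]_d) : R := \sum_(i < d) u i 0 * v i 0.
Definition enorm (d : nat) (v : 'cV[R]_d) : R := Num.sqrt (dotv v v).
Definition fnorm (d : nat) (A : 'M[R]_d) : R :=
  Num.sqrt (\sum_(i < d) \sum_(j < d) A i j ^+ 2).

Definition hasDeriv (d : nat) (y : 'cV[R]_d -> 'cV[R]_d) (A : 'M[R]_d) (x : 'cV[R]_d) :=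
  forall eps : R, 0 < eps -> exists del : R, 0 < del /\
    forall h : 'cV[R]_d, enorm h < del ->
      enorm (y (x + h) - y x - A *m h) <= eps * enorm h.

Definition lipschitz_domain (d : nat) (Om : set 'cV[R]_d) (L : R) : Prop :=
  [/\ Om !=set0, open Om, connected Om,
      (exists M : R, forall x, Om x -> enorm x <= M) /\ 0 <= L &
      forall p, closure Om p -> ~ Om p ->
        exists r : R, exists e : 'cV[R]_d, exists gam : 'cV[R]_d -> R,
          [/\ 0 < r, enorm e = 1,
              (forall u v, `|gam u - gam v| <= L * enorm (u - v)) &
              forall x, enorm (x - p) < r ->
                (Om x <-> dotv e x < gam (x - dotv e x *: e))]].

Definition diam (d : nat) (Om : set 'cV[R]_d) : R :=
  sup [set r | exists x x', [/\ Om x, Om x' & r = enorm (x - x')]].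

(* ||F||_{C^alpha(Om)} := sup |F| + [F]_alpha <= M, written out *)
Definition holder_norm_le (d : nat) (Om : set 'cV[R]_d) (F : 'cV[R]_d -> 'M[R]_d)
    (alpha M : R) : Prop :=
  exists A B : R, [/\ 0 <= A, 0 <= B, A + B <= M /\
    (forall x, Om x -> fnorm (F x) <= A) &
    (forall x x', Om x -> Om x' -> fnorm (F x - F x') <= B * powR (enorm (x - x')) alpha)].

Definition C1alpha (d : nat) (Om : set 'cV[R]_d) (alpha : R)
    (y : 'cV[R]_d -> 'cV[R]_d) (Dy : 'cV[R]_d -> 'M[R]_d) : Prop :=
  (forall x, Om x -> hasDeriv y (Dy x) x) /\ exists M : R, holder_norm_le Om Dy alpha M.

Definition three_bounds (d : nat) (Om : set 'cV[R]_d) (alpha delta M1 M2 : R)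
    (Dy : 'cV[R]_d -> 'M[R]_d) : Prop :=
  [/\ (forall x, Om x -> delta <= \det (Dy x)),
      (forall x, Om x -> fnorm (Dy x) <= M1) &
      holder_norm_le Om Dy alpha M2].

Definition loc_inj_radius (d : nat) (Om : set 'cV[R]_d) (L alpha delta M1 M2 rho : R) : Prop :=
  forall (y : 'cV[R]_d -> 'cV[R]_d) (Dy : 'cV[R]_d -> 'M[R]_d),
    C1alpha Om alpha y Dy -> three_bounds Om alpha delta M1 M2 Dy ->
    forall xb, closure Om xb ->
      (forall x1 x2, Om x1 -> Om x2 -> enorm (x1 - xb) < rho -> enorm (x2 - xb) < rho ->
         y x1 = y x2 -> x1 = x2) /\
      (forall x1 x2, Om x1 -> Om x2 -> enorm (x1 - xb) < rho -> enorm (x2 - xb) < rho ->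
         (1 / 2) * (delta / M1 ^+ d.-1) * enorm (x1 - x2) <= enorm (y x1 - y x2) /\
         enorm (y x1 - y x2) <= M1 * Num.sqrt (1 + L ^+ 2) * enorm (x1 - x2)).

(* Lebesgue integral over R^n of a nonnegative function of the coordinates,
   computed as the iterated one-dimensional Lebesgue integral (Tonelli). *)
Fixpoint iint (n : nat) (F : (nat -> R) -> \bar R) : \bar R :=
  match n with
  | 0 => F (fun _ => 0)
  | n'.+1 => (\int[@lebesgue_measure R]_t
                 iint n' (fun v => F (fun k => if k is k'.+1 then v k' else t)))%E
  end.

Definition int_RdxRd (d : nat) (G : 'cV[R]_d -> 'cV[R]_d -> \bar R) : \bar R :=
  iint (d + d) (fun v => G (\col_(i < d) v i) (\col_(i < d) v (d + i)%N)).

Definition ECN (d : nat) (Om : set 'cV[R]_d) (g : R -> R) (beta eps2 : R)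
    (y : 'cV[R]_d -> 'cV[R]_d) : \bar R :=
  ((powR eps2 beta)^-1)%:E *
  int_RdxRd (fun x xt =>
    if `[< Om x /\ Om xt >] then
      ((eps2 ^+ d)^-1 * Num.max (g (enorm (xt - x)) - g (eps2^-1 * enorm (y xt - y x))) 0)%:E
    else 0%E).

End Defs.

From HB Require Import structures.
From mathcomp Require Import all_boot all_order all_algebra.
From mathcomp Require Import all_classical all_reals all_analysis.
From mathcomp Require Import lra.
Import Order.TTheory GRing.Theory Num.Theory.
Import numFieldNormedType.Exports.
Local Open Scope classical_set_scope.
Local Open Scope ring_scope.

(* With [c := delta / (2 M1^(d-1))] and [epsbar := c], the map [y] expands
   distances by at least [eps2] on all of [Om]: pairs closer than [rho / 2]
   lie in a common ball of radius [rho] where the local bi-Lipschitz bound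
   gives the factor [c >= eps2], while for farther pairs the hypothesis gives
   [|y x1 - y x2| > diam Om * eps2 >= eps2 |x1 - x2|].  Hence
   [|xt - x| <= |y xt - y x| / eps2], so monotonicity of [g] makes the
   integrand of the energy vanish identically. *)

Section NonlocalEnergy.
Context {R : realType} {d : nat}.
Implicit Types (u v x xt : 'cV[R]_d) (Om : set 'cV[R]_d).

Lemma dotv_ge0 v : 0 <= dotv v v.
Proof. by apply: sumr_ge0 => i _; exact: sqr_ge0. Qed.

Lemma enorm_ge0 v : 0 <= enorm v.
Proof. exact: sqrtr_ge0. Qed.

Lemma enorm0 : enorm (0 : 'cV[R]_d) = 0.
Proof. by rewrite /enorm /dotv big1 ?sqrtr0 // => i _; rewrite mxE mul0r. Qed.

Lemma enormB u v : enorm (u - v) = enorm (v - u).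
Proof.
rewrite /enorm /dotv; congr Num.sqrt; apply: eq_bigr => i _.
by rewrite !mxE -mulrNN !opprB.
Qed.

Lemma dotvB_le u v : dotv (u - v) (u - v) <= 2 * dotv u u + 2 * dotv v v.
Proof.
rewrite /dotv !mulr_sumr -big_split /=; apply: ler_sum => i _.
rewrite !mxE; have := sqr_ge0 (u i 0 + v i 0); nra.
Qed.

Lemma enormB_le u v (M : R) :
  enorm u <= M -> enorm v <= M -> enorm (u - v) <= 2 * M.
Proof.
move=> uM vM; have M_ge0 : 0 <= M := le_trans (enorm_ge0 u) uM.
have sqr_le (w : 'cV[R]_d) : enorm w <= M -> dotv w w <= M ^+ 2.
  by move=> wM; rewrite -(sqr_sqrtr (dotv_ge0 w)) lerXn2r ?nnegrE ?enorm_ge0.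
rewrite -[2 * M]ger0_norm ?mulr_ge0 // -sqrtr_sqr; apply: ler_wsqrtr.
have := dotvB_le u v; have := sqr_le u uM; have := sqr_le v vM.
rewrite exprMn; lra.
Qed.

Lemma enorm_le_diam Om x x' :
  (exists M, forall z, Om z -> enorm z <= M) -> Om x -> Om x' ->
  enorm (x - x') <= diam Om.
Proof.
move=> [M OmM] Ox Ox'; apply: sup_upper_bound; last by exists x, x'.
split; first by exists (enorm (x - x')), x, x'.
by exists (2 * M) => _ [a [b [Oa Ob ->]]]; apply: enormB_le; apply: OmM.
Qed.

Lemma iint_eq0 (n : nat) (F : (nat -> R) -> \bar R) :
  (forall w, F w = 0%E) -> iint n F = 0%E.
Proof.
elim: n F => [|n IH] F F0 /=; first exact: F0.
under eq_fun do rewrite IH //.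
exact: integral0.
Qed.

Lemma ECN_eq0_of_expanding Om (g : R -> R) (beta eps2 : R)
    (y : 'cV[R]_d -> 'cV[R]_d) :
  (forall s t, 0 <= s -> s <= t -> g s <= g t) -> 0 < eps2 ->
  (forall x xt, Om x -> Om xt -> eps2 * enorm (xt - x) <= enorm (y xt - y x)) ->
  ECN Om g beta eps2 y = 0%E.
Proof.
move=> g_mono eps2_gt0 y_exp; rewrite /ECN /int_RdxRd iint_eq0 ?mule0 // => v.
case: asboolP => [[Ox Oxt]|//].
set x := \col_(i < d) v i; set xt := \col_(i < d) v (d + i)%N.
have g_le : g (enorm (xt - x)) <= g (eps2^-1 * enorm (y xt - y x)).
  by apply: g_mono; rewrite ?enorm_ge0 // ler_pdivlMl // y_exp.
by rewrite max_r ?subr_le0 // mulr0.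
Qed.

Lemma loc_inj_radius_lower_bound {Om} {L alpha delta M1 M2 rho : R}
    {y : 'cV[R]_d -> 'cV[R]_d} {Dy : 'cV[R]_d -> 'M[R]_d} {x xt} :
  loc_inj_radius Om L alpha delta M1 M2 rho ->
  C1alpha Om alpha y Dy -> three_bounds Om alpha delta M1 M2 Dy ->
  Om x -> Om xt -> enorm (xt - x) < rho ->
  (1 / 2) * (delta / M1 ^+ d.-1) * enorm (xt - x) <= enorm (y xt - y x).
Proof.
move=> rhoP y_C1 y_bounds Ox Oxt near.
have [_ bilip] := rhoP y Dy y_C1 y_bounds xt (subset_closure Oxt).
have xt_near : enorm (xt - xt) < rho.
  by rewrite subrr enorm0 (le_lt_trans (enorm_ge0 _) near).
by have [] := bilip xt x Oxt Ox xt_near; rewrite enormB.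
Qed.

End NonlocalEnergy.

Theorem corollary3p7 (R : realType) (d : nat) (Om : set 'cV[R]_d) (L : R)
  (g : R -> R) (alpha delta M1 M2 rho : R) :
  lipschitz_domain Om L ->
  {within [set t : R | 0 <= t], continuous g} ->
  (forall s t : R, 0 <= s -> s < t -> g s < g t) ->
  (forall t : R, 0 <= t -> 0 <= g t) ->
  g 0 = 0 ->
  0 < alpha -> alpha <= 1 -> 0 < delta -> 0 < M1 -> 0 < M2 ->
  0 < rho -> loc_inj_radius Om L alpha delta M1 M2 rho ->
  exists epsbar : R, 0 < epsbar /\
    forall (beta : R) (y : 'cV[R]_d -> 'cV[R]_d) (Dy : 'cV[R]_d -> 'M[R]_d) (eps2 : R),
      0 < beta ->
      C1alpha Om alpha y Dy ->
      three_bounds Om alpha delta M1 M2 Dy ->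
      0 < eps2 -> eps2 <= epsbar ->
      (forall x1 x2, Om x1 -> Om x2 -> rho / 2 < enorm (x1 - x2) ->
         diam Om * eps2 < enorm (y x1 - y x2)) ->
      ECN Om g beta eps2 y = 0%E.
Proof.
move=> [_ _ _ [Om_bdd _] _] _ g_incr _ _ _ _ delta_gt0 M1_gt0 _ rho_gt0 rhoP.
exists ((1 / 2) * (delta / M1 ^+ d.-1)); split.
  by rewrite mulr_gt0 ?divr_gt0 ?exprn_gt0.
move=> beta y Dy eps2 _ y_C1 y_bounds eps2_gt0 eps2_le far.
apply: ECN_eq0_of_expanding => // [s t s_ge0|x xt Ox Oxt].
  by rewrite le_eqVlt => /predU1P[<-|/(g_incr _ _ s_ge0)/ltW].
have [far_xxt|near_xxt] := ltrP (rho / 2) (enorm (xt - x)).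
  apply/ltW/(le_lt_trans _ (far _ _ Oxt Ox far_xxt)).
  by rewrite mulrC ler_wpM2r ?(ltW eps2_gt0) ?enorm_le_diam.
have near_rho : enorm (xt - x) < rho by lra.
apply: le_trans (loc_inj_radius_lower_bound rhoP y_C1 y_bounds Ox Oxt near_rho).
by rewrite ler_wpM2r ?enorm_ge0.
Qed.
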